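(* Let $\mathbf{X}\subseteq\mathbb{N}^n$ be hybridlinear. The following are equivalent: (1) $\mathbf{X}$ is directed hybridlinear; (2) there is a representation $\mathbf{X}=\{\mathbf{b}_1,\dots,\mathbf{b}_r\}+\mathbb{N}(\mathbf{F})$ with $(\mathbf{b}_i+\mathbb{N}(\mathbf{F}))\cap(\mathbf{b}_j+\mathbb{N}(\mathbf{F}))\neq\emptyset$ for all $1\le i,j\le r$; (3) there is a representation $\mathbf{X}=\{\mathbf{b}_1,\dots,\mathbf{b}_r\}+\mathbb{N}(\mathbf{F})$ with $\mathbf{b}_i-\mathbf{b}_j\in\mathbb{Z}(\mathbf{F})$ for all $1\le i,j\le r$.
   Context: Hybridlinear: $\mathbf{B}+\mathbb{N}(\mathbf{F})$ with $\mathbf{B},\mathbf{F}\subseteq\mathbb{N}^n$ finite; $\mathbb{Z}(\mathbf{F})$ is the set of integer linear combinations of $\mathbf{F}$. Preservants: $\mathbf{P}_{\mathbf{X}}=\{\mathbf{p}\in\mathbb{Z}^n\mid\mathbf{X}+\mathbf{p}\subseteq\mathbf{X}\}$; $\mathbf{x}\le_{\mathbf{P}}\mathbf{y}$ iff $\mathbf{y}-\mathbf{x}\in\mathbf{P}$. A well-quasi-order $(\mathbf{X},\le)$ is directed if any two elements have a common upper bound in $\mathbf{X}$. $\mathbf{X}$ is directed hybridlinear if $(\mathbf{X},\le_{\mathbf{P}_{\mathbf{X}}})$ is a directed well-quasi-order (well-founded, every subset has finitely many minimal elements). *)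

(* Vectors of Z^n are row vectors 'rV[int]_n; N^n is the
   subset of vectors with nonnegative entries. Subsets are Prop predicates. *)
From mathcomp Require Import all_boot all_order all_algebra.
Set Implicit Arguments. Unset Strict Implicit. Unset Printing Implicit Defensive.
Import Order.TTheory GRing.Theory Num.Theory.
Local Open Scope ring_scope.

Definition vec (n : nat) := 'rV[int]_n.

Definition natvec (n : nat) (x : vec n) : Prop := forall i, 0 <= x 0 i.

Definition NF (n : nat) (F : seq (vec n)) (x : vec n) : Prop :=
  exists c : 'I_(size F) -> nat, x = \sum_(i < size F) (F`_i) *+ c i.

Definition ZF (n : nat) (F : seq (vec n)) (x : vec n) : Prop :=
  exists c : 'I_(size F) -> int, x = \sum_(i < size F) (F`_i) *~ c i.

Definition coset (n : nat) (b : vec n) (F : seq (vec n)) (x : vec n) : Prop :=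
  exists y, NF F y /\ x = b + y.

Definition represents (n : nat) (X : vec n -> Prop) (B F : seq (vec n)) : Prop :=
  (forall b, b \in B -> natvec b) /\ (forall f, f \in F -> natvec f) /\
  (forall x, X x <-> exists2 b, b \in B & coset b F x).

Definition hybridlinear (n : nat) (X : vec n -> Prop) : Prop :=
  exists B F, represents X B F.

Definition preservants (n : nat) (X : vec n -> Prop) (p : vec n) : Prop :=
  forall x, X x -> X (x + p).

Definition leP (n : nat) (P : vec n -> Prop) (x y : vec n) : Prop := P (y - x).

Definition ltP (n : nat) (P : vec n -> Prop) (x y : vec n) : Prop :=
  leP P x y /\ ~ leP P y x.

Definition well_founded_on (n : nat) (X : vec n -> Prop)
    (le : vec n -> vec n -> Prop) : Prop :=
  ~ exists u : nat -> vec n,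
      forall k, X (u k) /\ (le (u k.+1) (u k) /\ ~ le (u k) (u k.+1)).

Definition minimal_in (n : nat) (S : vec n -> Prop)
    (le : vec n -> vec n -> Prop) (x : vec n) : Prop :=
  S x /\ forall y, S y -> le y x -> le x y.

Definition finitely_many_minimal (n : nat) (X : vec n -> Prop)
    (le : vec n -> vec n -> Prop) : Prop :=
  forall S : vec n -> Prop, (forall x, S x -> X x) ->
    exists m : seq (vec n), forall x, minimal_in S le x -> x \in m.

Definition wqo_on (n : nat) (X : vec n -> Prop)
    (le : vec n -> vec n -> Prop) : Prop :=
  well_founded_on X le /\ finitely_many_minimal X le.

Definition directed_on (n : nat) (X : vec n -> Prop)
    (le : vec n -> vec n -> Prop) : Prop :=
  forall x y, X x -> X y -> exists z, X z /\ le x z /\ le y z.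

Definition directed_hybridlinear (n : nat) (X : vec n -> Prop) : Prop :=
  hybridlinear X /\
  wqo_on X (leP (preservants X)) /\ directed_on X (leP (preservants X)).

From Pilot Require Import Defs.
From mathcomp Require Import all_boot all_order all_algebra zify.
From Stdlib Require Import ClassicalEpsilon.
Import Order.TTheory GRing.Theory Num.Theory.
Local Open Scope ring_scope.
Set Implicit Arguments. Unset Strict Implicit.

(* Two cosets b_i + N(F) and b_j + N(F) meet iff b_i - b_j lies in Z(F): this
   is (2) <-> (3).  Every hybridlinear set is a well-quasi-order under its
   preservant order: N(F) consists of preservants, so Dickson's lemma applied
   to the coefficient vectors over a common base gives every sequence a pair
   x_i <= x_j, and the preservants of a subset of N^n are nonnegative, which
   makes the order antisymmetric.  Under (3), b_i + u and b_j + v have the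
   common upper bound w + u + v for any w in both cosets.  Conversely, if X is
   directed, a common upper bound z of the bases makes every z - b_i a
   preservant; adjoining these to F leaves X unchanged and puts
   b_i - b_j = (z - b_j) - (z - b_i) in Z(F). *)

Lemma NF_natE (n : nat) (F : seq (vec n)) x :
  NF F x <-> exists c : nat -> nat, x = \sum_(0 <= i < size F) F`_i *+ c i.
Proof.
split.
- case=> c ->; exists (fun i => odflt 0%N (omap c (insub i))).
  by rewrite big_mkord; apply: eq_bigr => i _; rewrite valK.
- by case=> c ->; exists (fun i => c (val i)); rewrite big_mkord.
Qed.

Section Spans.
Variables (n : nat) (F : seq (vec n)).

Lemma NF0 : NF F 0.
Proof. by exists (fun _ => 0%N); rewrite big1 // => i _; rewrite mulr0n. Qed.

Lemma NFD x y : NF F x -> NF F y -> NF F (x + y).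
Proof.
case=> c -> [d ->]; exists (fun i => (c i + d i)%N).
by rewrite -big_split; apply: eq_bigr => i _; rewrite mulrnDr.
Qed.

Lemma NF_mem f : f \in F -> NF F f.
Proof.
move=> fF; have fi : (index f F < size F)%N by rewrite index_mem.
exists (fun i => if val i == index f F then 1%N else 0%N).
rewrite (bigD1 (Ordinal fi)) //= eqxx nth_index // big1 ?addr0 // => i /eqP ne.
by case: eqP => // e; case: ne; apply: val_inj.
Qed.

Lemma NF_catl G x : NF F x -> NF (F ++ G) x.
Proof.
move/NF_natE=> [c ->]; apply/NF_natE.
exists (fun i => if (i < size F)%N then c i else 0%N).
rewrite size_cat [RHS](@big_cat_nat _ _ _ (size F)) ?leq_addr //=.
rewrite [X in _ + X]big1_seq ?addr0; last first.
  move=> i /andP[_]; rewrite mem_index_iota => /andP[Fi _].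
  by rewrite ifN ?mulr0n // -leqNgt.
by apply: eq_big_nat => i /andP[_ iF]; rewrite nth_cat iF.
Qed.

Lemma NF_ZF x : NF F x -> ZF F x.
Proof. by case=> c ->; exists (fun i => (c i)%:Z). Qed.

Lemma ZFB x y : ZF F x -> ZF F y -> ZF F (x - y).
Proof.
case=> c -> [d ->]; exists (fun i => c i - d i).
by rewrite -sumrB; apply: eq_bigr => i _; rewrite mulrzBr.
Qed.

Lemma coset_meetP bi bj :
  (exists x, coset bi F x /\ coset bj F x) <-> ZF F (bi - bj).
Proof.
split.
  case=> x [[y1 [y1F ->]] [y2 [y2F e]]].
  have -> : bi - bj = y2 - y1.
    by apply/eqP; rewrite subr_eq addrAC (addrC y2) -e addrK.
  by apply: ZFB; apply: NF_ZF.
case=> z ez.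
(* Split the integer coefficients into positive and negative parts. *)
pose cp i := if z i is Posz m then m else 0%N.
pose cn i := if z i is Negz m then m.+1 else 0%N.
pose Sp := \sum_(i < size F) F`_i *+ cp i.
pose Sn := \sum_(i < size F) F`_i *+ cn i.
have e : bi - bj = Sp - Sn.
  rewrite ez -sumrB; apply: eq_bigr => i _; rewrite /cp /cn.
  by case: (z i) => m /=; rewrite ?mulr0n ?subr0 ?sub0r.
exists (bi + Sn); split; first by exists Sn; split => //; exists cn.
exists Sp; split; first by exists cp.
by move/eqP: e; rewrite subr_eq => /eqP ->; rewrite addrAC subrK addrC.
Qed.

End Spans.

Definition pairwise_meeting_cosets (n : nat) (B F : seq (vec n)) : Prop :=
  forall bi bj, bi \in B -> bj \in B -> exists x, coset bi F x /\ coset bj F x.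

Definition pairwise_ZF_bases (n : nat) (B F : seq (vec n)) : Prop :=
  forall bi bj, bi \in B -> bj \in B -> ZF F (bi - bj).

Lemma meeting_cosets_ZF_bases (n : nat) (B F : seq (vec n)) :
  pairwise_meeting_cosets B F <-> pairwise_ZF_bases B F.
Proof.
by split=> h bi bj bi_B bj_B; apply/coset_meetP; apply: h.
Qed.

Section Preservants.
Variables (n : nat) (X : vec n -> Prop).
Local Notation P := (preservants X).

Lemma preservants0 : P 0.
Proof. by move=> x; rewrite addr0. Qed.

Lemma preservantsD p q : P p -> P q -> P (p + q).
Proof. by move=> Pp Pq x Xx; rewrite addrA; apply/Pq/Pp. Qed.

Lemma preservants_NF (S : seq (vec n)) y :
  (forall s, s \in S -> P s) -> NF S y -> P y.
Proof.
move=> PS [c ->]; apply: (big_ind P preservants0 preservantsD) => i _.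
elim: (c i) => [|k IH]; first by rewrite mulr0n; apply: preservants0.
by rewrite mulrSr; apply: preservantsD IH (PS _ (mem_nth _ (ltn_ord i))).
Qed.

Lemma leP_refl x : Defs.leP P x x.
Proof. by rewrite /Defs.leP subrr; apply: preservants0. Qed.

Lemma leP_trans x y z : Defs.leP P x y -> Defs.leP P y z -> Defs.leP P x z.
Proof.
by move=> xy yz; rewrite /Defs.leP -(subrK y z) -addrA; apply: preservantsD.
Qed.

End Preservants.

Section Representation.
Variables (n : nat) (X : vec n -> Prop) (B F : seq (vec n)).
Hypothesis XBF : represents X B F.
Local Notation P := (preservants X).

Lemma representsP x : X x <-> exists2 b, b \in B & coset b F x.
Proof. by case: XBF => _ [_ ->]. Qed.

Lemma represents_base b : b \in B -> X b.
Proof.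
move=> bB; apply/representsP; exists b => //.
by exists 0; split; [apply: NF0 | rewrite addr0].
Qed.

Lemma natvecD (x y : vec n) : natvec x -> natvec y -> natvec (x + y).
Proof. by move=> x_ge0 y_ge0 i; rewrite mxE addr_ge0. Qed.

Lemma represents_natvec x : X x -> natvec x.
Proof.
case: XBF => B_ge0 [F_ge0 _] /representsP [b bB [_ [[c ->] ->]]].
apply: natvecD (B_ge0 _ bB) _ => i; rewrite summxE; apply: sumr_ge0 => j _.
by rewrite mulmxnE mulrn_wge0 // F_ge0 // mem_nth.
Qed.

Lemma NF_preservants y : NF F y -> P y.
Proof.
move=> Fy x /representsP [b bB [z [Fz ->]]]; apply/representsP; exists b => //.
by exists (z + y); split; [apply: NFD | rewrite addrA].
Qed.

(* x0 + k p stays in N^n for every k, so no entry of p can be negative. *)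
Lemma preservants_natvec x0 p : X x0 -> P p -> natvec p.
Proof.
move=> Xx0 Pp i.
have Xk k : X (x0 + p *+ k).
  elim: k => [|k IH]; first by rewrite mulr0n addr0.
  by rewrite mulrSr addrA; apply: Pp.
have ge0 k : 0 <= x0 0 i + p 0 i *+ k.
  by have := represents_natvec (Xk k) i; rewrite mxE mulmxnE.
rewrite leNgt; apply/negP => p_lt0.
by have := ge0 (absz (x0 0 i)).+1; rewrite -mulr_natr; nia.
Qed.

Lemma leP_anti x y : X x -> X y -> Defs.leP P x y -> Defs.leP P y x -> x = y.
Proof.
move=> Xx _ /(preservants_natvec Xx) xy /(preservants_natvec Xx) yx.
apply/matrixP => i j; rewrite (ord1 i); apply/eqP; rewrite eq_le.
by have := xy j; have := yx j; rewrite !mxE !subr_ge0 => -> ->.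
Qed.

End Representation.

Lemma ex_argmin_from (v : nat -> nat) a :
  exists m, (a <= m)%N /\ forall j, (a <= j)%N -> (v m <= v j)%N.
Proof.
suff min_below t : (exists2 j, (a <= j)%N & (v j <= t)%N) ->
    exists m, (a <= m)%N /\ forall j, (a <= j)%N -> (v m <= v j)%N.
  by apply: (min_below (v a)); exists a.
elim: t => [|t IH] [j aj vj].
  by exists j; split => // k _; move: vj; rewrite leqn0 => /eqP ->.
have [|no_smaller] := classic (exists2 j, (a <= j)%N & (v j <= t)%N).
  exact: IH.
exists j; split => // k ak; rewrite leqNgt; apply/negP => vkj.
by apply: no_smaller; exists k; rewrite // -ltnS (leq_trans vkj vj).
Qed.

Lemma nondecreasing_subseq (v : nat -> nat) : exists phi : nat -> nat,
  (forall k, (phi k < phi k.+1)%N) /\ forall k, (v (phi k) <= v (phi k.+1))%N.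
Proof.
have [m mP] := choice _ (ex_argmin_from v).
pose phi := fix phi k := if k is k'.+1 then m (phi k').+1 else m 0%N.
have phi_inc k : (phi k < phi k.+1)%N by apply: (proj1 (mP _)).
exists phi; split => // -[|k]; first exact: (proj2 (mP 0%N)).
by apply: (proj2 (mP _)); apply: leq_trans (phi_inc k) (ltnW (phi_inc k.+1)).
Qed.

Lemma dickson_subseq (m : nat) (u : nat -> nat -> nat) :
  exists phi : nat -> nat, (forall k, (phi k < phi k.+1)%N) /\
  forall k j, (j < m)%N -> (u (phi k) j <= u (phi k.+1) j)%N.
Proof.
elim: m => [|m [phi [phi_inc phi_mon]]]; first by exists id.
have [psi [psi_inc psi_mon]] := nondecreasing_subseq (fun k => u (phi k) m).
have phi_homo : {homo phi : i j / (i < j)%N}.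
  by apply: homo_ltn => //; apply: ltn_trans.
exists (phi \o psi); split => [k|k j]; first exact: phi_homo.
rewrite ltnS leq_eqVlt => /orP[/eqP ->|jm]; first exact: psi_mon.
have mon := @homo_leq _ (fun i => u (phi i) j) leq leqnn
  (fun a b c => @leq_trans a b c) (fun i => phi_mon i j jm).
by apply: mon; apply: ltnW.
Qed.

Section GoodSequences.
Variables (n : nat) (X : vec n -> Prop) (le : vec n -> vec n -> Prop).
Hypothesis le_refl : forall x, le x x.
Hypothesis le_trans : forall x y z, le x y -> le y z -> le x z.
Hypothesis le_anti : forall x y, X x -> X y -> le x y -> le y x -> x = y.
Hypothesis good : forall u : nat -> vec n, (forall k, X (u k)) ->
  exists i j, (i < j)%N /\ le (u i) (u j).

Lemma good_well_founded : well_founded_on X le.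
Proof.
move=> [u u_desc].
have below k j : (k < j)%N -> le (u j) (u k.+1).
  elim: j => // j IH; rewrite ltnS leq_eqVlt => /orP[/eqP ->|kj].
    exact: le_refl.
  exact: le_trans (proj1 (proj2 (u_desc j))) (IH kj).
have [i [j [ij uij]]] := good (fun k => proj1 (u_desc k)).
exact: (proj2 (proj2 (u_desc i))) (le_trans uij (below i j ij)).
Qed.

(* Infinitely many minimal elements would form a sequence of pairwise distinct
   elements with no good pair. *)
Lemma good_finitely_many_minimal : finitely_many_minimal X le.
Proof.
move=> S SX; apply: NNPP => no_list.
have fresh (s : seq (vec n)) : exists x, minimal_in S le x /\ x \notin s.
  apply: NNPP => none; apply: no_list; exists s => x xmin; apply: NNPP => xs.
  by apply: none; exists x; split => //; apply/negP.
have [g gP] := choice _ fresh.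
pose L := fix L k := if k is k'.+1 then g (L k') :: L k' else [::].
pose x k := g (L k).
have x_min k : minimal_in S le (x k) := proj1 (gP (L k)).
have x_in_L i j : (i < j)%N -> x i \in L j.
  elim: j => // j IH; rewrite ltnS leq_eqVlt inE => /orP[/eqP ->|ij].
    by rewrite eqxx.
  by rewrite IH ?orbT.
have Xx k : X (x k) := SX _ (proj1 (x_min k)).
have [i [j [ij xij]]] := good Xx.
have xji := proj2 (x_min j) _ (proj1 (x_min i)) xij.
have := proj2 (gP (L j)); rewrite -/(x j).
by rewrite -(le_anti (Xx i) (Xx j) xij xji) x_in_L.
Qed.

Lemma good_wqo : wqo_on X le.
Proof.
by split; [apply: good_well_founded | apply: good_finitely_many_minimal].
Qed.

End GoodSequences.

Section RepresentationWqo.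
Variables (n : nat) (X : vec n -> Prop) (B F : seq (vec n)).
Hypothesis XBF : represents X B F.
Local Notation le := (Defs.leP (preservants X)).

Lemma represents_good (u : nat -> vec n) : (forall k, X (u k)) ->
  exists i j, (i < j)%N /\ le (u i) (u j).
Proof.
move=> Xu.
have decomp k : exists q : nat * (nat -> nat), (q.1 < size B)%N /\
    u k = B`_q.1 + \sum_(0 <= j < size F) F`_j *+ q.2 j.
  have /(representsP XBF) [b bB [y [/NF_natE [c ->] ->]]] := Xu k.
  by exists (index b B, c); rewrite /= index_mem nth_index.
have [q qP] := choice _ decomp.
(* The two last coordinates, b and size B - b, force equal base indices. *)
pose coord k j := if (j < size F)%N then (q k).2 j
  else if j == size F then (q k).1 else (size B - (q k).1)%N.
have [phi [phi_inc phi_mon]] := dickson_subseq (size F).+2 coord.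
pose i := phi 0%N; pose j := phi 1%N.
exists i, j; split; first exact: phi_inc.
have base_eq : (q i).1 = (q j).1.
  have := phi_mon 0%N (size F) (leqnSn _); rewrite /coord ltnn eqxx.
  have := phi_mon 0%N (size F).+1 (leqnn _).
  rewrite /coord ltnNge leqnSn /= eqn_leq ltnn /=.
  by have := proj1 (qP i); have := proj1 (qP j); rewrite /i /j; lia.
have coef_le l : (l < size F)%N -> ((q i).2 l <= (q j).2 l)%N.
  by move=> lF; have := phi_mon 0%N l ltac:(lia); rewrite /coord lF.
rewrite /Defs.leP (proj2 (qP j)) (proj2 (qP i)) base_eq.
rewrite opprD addrACA subrr add0r -sumrB.
apply: (NF_preservants XBF); apply/NF_natE.
exists (fun l => ((q j).2 l - (q i).2 l)%N); apply: eq_big_nat => l /andP[_ lF].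
by rewrite mulrnBr // coef_le.
Qed.

Lemma represents_wqo : wqo_on X le.
Proof.
apply: good_wqo; [exact: leP_refl | exact: leP_trans | exact: leP_anti XBF |].
exact: represents_good.
Qed.

End RepresentationWqo.

Section Directedness.
Variables (n : nat) (X : vec n -> Prop).
Local Notation P := (preservants X).
Local Notation le := (Defs.leP P).

Lemma directed_upper_bound x0 (L : seq (vec n)) : X x0 -> directed_on X le ->
  (forall b, b \in L -> X b) -> exists z, X z /\ forall b, b \in L -> le b z.
Proof.
move=> Xx0 dirX; elim: L => [|a L IH] XL; first by exists x0.
have [z [Xz Lz]] : exists z, X z /\ forall b, b \in L -> le b z.
  by apply: IH => b bL; apply: XL; rewrite inE bL orbT.
have [w [Xw [aw zw]]] := dirX a z (XL a (mem_head _ _)) Xz.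
exists w; split => // b; rewrite inE => /orP[/eqP -> //|bL].
exact: leP_trans (Lz b bL) zw.
Qed.

Lemma directed_ZF_representation B F : represents X B F -> directed_on X le ->
  exists B' F', represents X B' F' /\ pairwise_ZF_bases B' F'.
Proof.
move=> XBF dirX; case: B XBF => [|b0 B0] XBF; first by exists [::], F.
set B := b0 :: B0 in XBF *.
have XB := represents_base XBF.
have Xb0 : X b0 := XB b0 (mem_head _ _).
have [z [Xz Bz]] := directed_upper_bound Xb0 dirX XB.
pose G := [seq z - b | b <- B].
have PFG s : s \in F ++ G -> P s.
  rewrite mem_cat => /orP[/NF_mem /(NF_preservants XBF) // | /mapP [b bB ->]].
  exact: Bz.
exists B, (F ++ G); split; last first.
  move=> bi bj biB bjB.
  have -> : bi - bj = (z - bj) - (z - bi).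
    by rewrite opprB [RHS]addrC addrA subrK.
  apply: ZFB; apply/NF_ZF/NF_mem;
    by rewrite mem_cat (map_f (fun b => z - b)) ?orbT.
case: (XBF) => B_ge0 [F_ge0 _]; split => //; split.
  by move=> s /PFG /(preservants_natvec XBF Xb0).
move=> x; split.
  move/(representsP XBF) => [b bB [y [Fy ->]]]; exists b => //.
  by exists y; split => //; apply: NF_catl.
by move=> [b bB [y [FGy ->]]]; apply: (preservants_NF PFG FGy); apply: XB.
Qed.

Lemma ZF_representation_directed B F : represents X B F ->
  pairwise_ZF_bases B F -> directed_on X le.
Proof.
move=> XBF BZ x y /(representsP XBF) [bi biB [u [Fu ex]]].
move=> /(representsP XBF) [bj bjB [v [Fv ey]]].
have [w [[a [Fa ew1]] [c [Fc ew2]]]] :=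
  proj2 (coset_meetP F bi bj) (BZ bi bj biB bjB).
exists (w + u + v); split.
  apply/(representsP XBF); exists bi => //; exists (a + u + v).
  by rewrite ew1 !addrA; split => //; apply: NFD => //; apply: NFD.
split; rewrite /Defs.leP.
  have -> : w + u + v - x = a + v.
    by apply/matrixP => i j; rewrite ex ew1 !mxE; lia.
  by apply: (NF_preservants XBF); apply: NFD.
have -> : w + u + v - y = c + u.
  by apply/matrixP => i j; rewrite ey ew2 !mxE; lia.
by apply: (NF_preservants XBF); apply: NFD.
Qed.

Lemma directed_hybridlinearP :
  directed_hybridlinear X <->
  exists B F, represents X B F /\ pairwise_ZF_bases B F.
Proof.
split=> [[[B [F XBF]] [_ dirX]] | [B [F [XBF BZ]]]].
  exact: directed_ZF_representation XBF dirX.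
split; first by exists B, F.
split; first exact: represents_wqo XBF.
exact: ZF_representation_directed XBF BZ.
Qed.

Lemma meeting_cosets_representationP :
  (exists B F, represents X B F /\ pairwise_meeting_cosets B F) <->
  (exists B F, represents X B F /\ pairwise_ZF_bases B F).
Proof.
split=> -[B [F [XBF BF]]]; exists B, F;
  by split => //; apply/meeting_cosets_ZF_bases.
Qed.

End Directedness.

Theorem mainTheorem15 (n : nat) (X : vec n -> Prop) :
  hybridlinear X ->
  [/\ (directed_hybridlinear X <->
        exists B F, represents X B F /\
          (forall bi bj, bi \in B -> bj \in B ->
             exists x, coset bi F x /\ coset bj F x)),
      (directed_hybridlinear X <->
        exists B F, represents X B F /\
          (forall bi bj, bi \in B -> bj \in B -> ZF F (bi - bj))) &
      ((exists B F, represents X B F /\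
          (forall bi bj, bi \in B -> bj \in B ->
             exists x, coset bi F x /\ coset bj F x)) <->
       (exists B F, represents X B F /\
          (forall bi bj, bi \in B -> bj \in B -> ZF F (bi - bj))))].
Proof.
(* Each of the three conditions already provides a representation of X. *)
move=> _; have directedP := directed_hybridlinearP X.
have meetingP := meeting_cosets_representationP X.
split; [exact: iff_trans directedP (iff_sym meetingP) | exact: directedP |].
exact: meetingP.
Qed.
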